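(* For a semiring $(S,+,\cdot)$ the following are equivalent: (i) $S$ is a b-lattice of nil-extensions of rectangular skew-rings; (ii) $S$ is a quasi completely regular semiring and for all $e,f\in E^+(S)$ there exists a positive integer $n$ such that $n(e+f)=(n+1)(e+f)$; (iii) $S$ is additively quasi regular, $b^2\,\mathscr{H}^{*^{+}}\,b$ for all $b\in S$, and for all $a,x\in S$, $a=a+x+a$ implies $a=a+2x+2a$.
   Context: A semiring $(S,+,\cdot)$ has two associative operations with $a(b+c)=ab+ac$, $(b+c)a=ba+ca$. For a positive integer $n$, $na=a+\dots+a$ ($n$ terms); $b^2=b\cdot b$. $E^+(S)$ is the set of additive idempotents. $a$ is additively regular if $a=a+x+a$ for some $x\in S$; $S$ is additively quasi regular if for each $a$ some $na$ is additively regular. $a$ is completely regular if there is $x$ with $a=a+x+a$, $a+x=x+a$, $a(a+x)=a+x$; $S$ is quasi completely regular if for each $a\in S$ some $na$ is completely regular. Green's relations of $(S,+)$ are denoted $\mathscr{L}^+,\mathscr{R}^+,\mathscr{J}^+,\mathscr{H}^+$. For additively quasi regular $S$ and $a\in S$, let $m(a)$ be the least positive integer with $m(a)a$ additively regular; define $a\,\mathscr{L}^{*^{+}}\,b$ iff $m(a)a\,\mathscr{L}^+\,m(b)b$, $a\,\mathscr{R}^{*^{+}}\,b$ iff $m(a)a\,\mathscr{R}^+\,m(b)b$, and $\mathscr{H}^{*^{+}}=\mathscr{L}^{*^{+}}\cap\mathscr{R}^{*^{+}}$. A completely simple semiring is a semiring in which every element is completely regular and $\mathscr{J}^+=S\times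 S$. A rectangular skew-ring is a completely simple semiring $K$ with $E^+(K)$ a subsemigroup of $(K,+)$. A semiring $S$ is a nil-extension of a subsemiring $K$ if $K$ is a bi-ideal of $S$ (for $a\in K$, $x\in S$: $a+x,x+a,ax,xa\in K$) and for every $a\in S$ there is $n\ge1$ with $na\in K$. A b-lattice is a semiring with $(S,\cdot)$ a band and $(S,+)$ a semilattice. $S$ is a b-lattice of semirings of a given class if there is a congruence $\rho$ on $S$ with $S/\rho$ a b-lattice and every $\rho$-class a subsemiring of that class. *)

Record semiring := Semiring {
  car :> Type;
  sadd : car -> car -> car;
  smul : car -> car -> car;
  sadd_assoc : forall a b c, sadd a (sadd b c) = sadd (sadd a b) c;
  smul_assoc : forall a b c, smul a (smul b c) = smul (smul a b) c;
  smul_addr : forall a b c, smul a (sadd b c) = sadd (smul a b) (smul a c);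
  smul_addl : forall a b c, smul (sadd b c) a = sadd (smul b a) (smul c a)
}.

Arguments sadd {s} _ _.
Arguments smul {s} _ _.

Declare Scope sr_scope.
Delimit Scope sr_scope with sr.
Infix "+" := sadd : sr_scope.
Infix "*" := smul : sr_scope.
Local Open Scope sr_scope.

Section Defs.
Variable S : semiring.

(* nmul' k a = (k+1) a = a + ... + a  (k+1 terms) *)
Fixpoint nmul' (k : nat) (a : S) : S :=
  match k with O => a | Datatypes.S k' => a + nmul' k' a end.

(* n a for a positive integer n (only used with 0 < n; nmul 0 a = a is junk). *)
Definition nmul (n : nat) (a : S) : S := nmul' (Nat.pred n) a.

Definition add_idem (e : S) : Prop := e + e = e.

Definition add_regular (a : S) : Prop := exists x : S, a = a + x + a.

Definition add_quasi_regular : Prop :=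
  forall a : S, exists n, 0 < n /\ add_regular (nmul n a).

Definition compl_regular_in (K : S -> Prop) (a : S) : Prop :=
  exists x : S, K x /\ a = a + x + a /\ a + x = x + a /\ a * (a + x) = a + x.

Definition compl_regular (a : S) : Prop := compl_regular_in (fun _ => True) a.

Definition quasi_compl_regular : Prop :=
  forall a : S, exists n, 0 < n /\ compl_regular (nmul n a).

Definition Lplus (a b : S) : Prop :=
  (a = b \/ exists x, a = x + b) /\ (b = a \/ exists y, b = y + a).
Definition Rplus (a b : S) : Prop :=
  (a = b \/ exists x, a = b + x) /\ (b = a \/ exists y, b = a + y).
Definition Hplus (a b : S) : Prop := Lplus a b /\ Rplus a b.

Definition is_m (a : S) (n : nat) : Prop :=
  0 < n /\ add_regular (nmul n a) /\
  forall k, 0 < k -> add_regular (nmul k a) -> n <= k.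

Definition Lstar (a b : S) : Prop :=
  exists m n, is_m a m /\ is_m b n /\ Lplus (nmul m a) (nmul n b).
Definition Rstar (a b : S) : Prop :=
  exists m n, is_m a m /\ is_m b n /\ Rplus (nmul m a) (nmul n b).
Definition Hstar (a b : S) : Prop := Lstar a b /\ Rstar a b.

Definition subsemiring (K : S -> Prop) : Prop :=
  (exists a, K a) /\ (forall a b, K a -> K b -> K (a + b) /\ K (a * b)).

(* a is in K^1 + b + K^1 (ideal generated by b in the semigroup (K,+)) *)
Definition in_J_ideal (K : S -> Prop) (a b : S) : Prop :=
  a = b \/ (exists x, K x /\ a = x + b) \/ (exists y, K y /\ a = b + y)
  \/ (exists x y, K x /\ K y /\ a = x + b + y).

Definition Jplus_universal (K : S -> Prop) : Prop :=
  forall a b, K a -> K b -> in_J_ideal K a b /\ in_J_ideal K b a.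

Definition completely_simple (K : S -> Prop) : Prop :=
  subsemiring K /\ (forall a, K a -> compl_regular_in K a) /\ Jplus_universal K.

Definition rect_skew_ring (K : S -> Prop) : Prop :=
  completely_simple K /\
  (forall e f, K e -> K f -> add_idem e -> add_idem f -> add_idem (e + f)).

Definition nil_extension (T K : S -> Prop) : Prop :=
  subsemiring T /\ subsemiring K /\ (forall a, K a -> T a) /\
  (forall a x, K a -> T x -> K (a + x) /\ K (x + a) /\ K (a * x) /\ K (x * a)) /\
  (forall a, T a -> exists n, 0 < n /\ K (nmul n a)).

Definition congruence (rho : S -> S -> Prop) : Prop :=
  (forall a, rho a a) /\ (forall a b, rho a b -> rho b a) /\
  (forall a b c, rho a b -> rho b c -> rho a c) /\
  (forall a b c, rho a b -> rho (a + c) (b + c) /\ rho (c + a) (c + b)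
                         /\ rho (a * c) (b * c) /\ rho (c * a) (c * b)).

(* S/rho is a b-lattice: (S/rho,.) a band and (S/rho,+) a semilattice *)
Definition quotient_b_lattice (rho : S -> S -> Prop) : Prop :=
  (forall a, rho (a * a) a) /\ (forall a, rho (a + a) a) /\
  (forall a b, rho (a + b) (b + a)).

Definition b_lattice_nilext_rsr : Prop :=
  exists rho : S -> S -> Prop,
    congruence rho /\ quotient_b_lattice rho /\
    forall a : S,
      subsemiring (rho a) /\
      exists K : S -> Prop, rect_skew_ring K /\ nil_extension (rho a) K.

End Defs.

Arguments nmul {S} _ _.
Arguments add_idem {S} _.
Arguments add_quasi_regular S : clear implicits.
Arguments quasi_compl_regular S : clear implicits.
Arguments Hstar {S} _ _.
Arguments b_lattice_nilext_rsr S : clear implicits.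

(* Both (ii) and (iii) yield three facts: S is quasi completely regular, every additively
   regular element lies in a subgroup of (S,+), and a sum of two additive idempotents that lies
   in a subgroup is idempotent.  From these, the relation "each of a, b divides (in (S,+)) a
   multiple of the other" is a congruence with a b-lattice quotient; in each class the additively
   regular elements form a rectangular skew-ring, of which the class is a nil-extension.
   Conversely, under (i) the additive semigroup is stable and the idempotents of each core form a
   rectangular band.  Applied to the identity of the group of a multiple of e + f this gives
   n(e+f) = (n+1)(e+f); applied to a + x and x + a it gives a = a + 2x + 2a; and comparing the
   H-classes of m(b)b, of its square and of m(b^2)b^2 inside the core of the class of b gives
   b^2 H*+ b. *)

From Stdlib Require Import Arith Lia Classical.
Local Open Scope sr_scope.

#[local] Arguments nmul' {S} k a.
#[local] Arguments add_regular {S} a.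

Ltac sr_assoc := repeat rewrite sadd_assoc; reflexivity.

Section Multiples.
Variable R : semiring.
Implicit Types a b c e x y : R.

Lemma nmul'_succ_r k a : nmul' (S k) a = nmul' k a + a.
Proof.
  induction k as [|k IH]; [reflexivity|].
  change (a + nmul' (S k) a = a + nmul' k a + a). rewrite IH. sr_assoc.
Qed.

Lemma nmul'_add j k a : nmul' (j + k + 1) a = nmul' j a + nmul' k a.
Proof.
  induction j as [|j IH]; simpl.
  - rewrite Nat.add_1_r. reflexivity.
  - rewrite IH. sr_assoc.
Qed.

Lemma nmul'_add_comm j k a : nmul' j a + nmul' k a = nmul' k a + nmul' j a.
Proof. rewrite <- !nmul'_add. f_equal. lia. Qed.

Lemma nmul'_split j k a : j < k ->
  nmul' k a = nmul' j a + nmul' (k - j - 1) a /\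
  nmul' k a = nmul' (k - j - 1) a + nmul' j a.
Proof.
  intro Hjk. rewrite nmul'_add_comm, <- nmul'_add.
  replace (k - j - 1 + j + 1)%nat with k by lia. split; reflexivity.
Qed.

Lemma nmul'_mul_r k a x : nmul' k a * x = nmul' k (a * x).
Proof. induction k as [|k IH]; simpl; [|rewrite smul_addl, IH]; reflexivity. Qed.

Lemma nmul'_mul_l k a x : x * nmul' k a = nmul' k (x * a).
Proof. induction k as [|k IH]; simpl; [|rewrite smul_addr, IH]; reflexivity. Qed.

Lemma nmul'_nmul' j k a : nmul' j (nmul' k a) = nmul' (j * k + j + k) a.
Proof.
  induction j as [|j IH]; simpl; [reflexivity|].
  rewrite IH, <- nmul'_add. f_equal. lia.
Qed.

Lemma nmul'_mul j k a b : nmul' j a * nmul' k b = nmul' (j * k + j + k) (a * b).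
Proof. rewrite nmul'_mul_r, nmul'_mul_l, nmul'_nmul'. reflexivity. Qed.

Lemma nmul'_idem k e : add_idem e -> nmul' k e = e.
Proof. intro He. induction k as [|k IH]; simpl; [|rewrite IH]; easy. Qed.

Lemma nmul'_add_distr k a b : a + b = b + a -> nmul' k (a + b) = nmul' k a + nmul' k b.
Proof.
  intro Hab. induction k as [|k IH]; simpl; [reflexivity|].
  assert (Hcomm : b + nmul' k a = nmul' k a + b).
  { clear IH. induction k as [|k IH]; simpl; [easy|].
    rewrite sadd_assoc, <- Hab, <- sadd_assoc, IH. sr_assoc. }
  rewrite IH. transitivity (a + (b + nmul' k a) + nmul' k b); [sr_assoc|].
  rewrite Hcomm. sr_assoc.
Qed.

Lemma nmul'_absorb_l k c a : c + a = a -> c + nmul' k a = nmul' k a.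
Proof. intro H. destruct k; simpl; [|rewrite sadd_assoc, H]; easy. Qed.

Lemma nmul'_absorb_r k c a : a + c = a -> nmul' k a + c = nmul' k a.
Proof. intro H. destruct k; [easy|]. rewrite nmul'_succ_r, <- sadd_assoc, H. reflexivity. Qed.

Lemma add_nmul'_absorb k a c : a + c = a -> a + nmul' k c = a.
Proof. intro H. induction k as [|k IH]; simpl; [|rewrite sadd_assoc, H]; easy. Qed.

Lemma nmul'_add_head k a c : exists w, nmul' k a + c = a + w.
Proof. destruct k; simpl; eexists; [reflexivity | symmetry; apply sadd_assoc]. Qed.

Lemma nmul'_add_last k a c : exists w, c + nmul' k a = w + a.
Proof.
  destruct k; [eexists; reflexivity|].
  rewrite nmul'_succ_r. eexists. apply sadd_assoc.
Qed.

End Multiples.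

Section AdditiveSemigroup.
Variable R : semiring.
Implicit Types a b e h s t u w x y : R.

Definition add_group_element a := exists y, a = a + y + a /\ a + y = y + a.

Lemma idem_fix_l s u w : add_idem s -> u = s + w -> s + u = u.
Proof. intros Hs ->. rewrite sadd_assoc, Hs. reflexivity. Qed.

Lemma idem_fix_r s u w : add_idem s -> u = w + s -> u + s = u.
Proof. intros Hs ->. rewrite <- sadd_assoc, Hs. reflexivity. Qed.

Lemma idem_regular e : add_idem e -> add_regular e.
Proof. intro He. exists e. rewrite !He. reflexivity. Qed.

Lemma regular_mul_r b t : add_regular b -> add_regular (b * t).
Proof. intros [x Hx]. exists (x * t). rewrite <- !smul_addl, <- Hx. reflexivity. Qed.

Lemma regular_mul_l b t : add_regular b -> add_regular (t * b).
Proof. intros [x Hx]. exists (t * x). rewrite <- !smul_addr, <- Hx. reflexivity. Qed.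

Lemma regular_idem_l a x : a = a + x + a -> add_idem (a + x).
Proof. intro Hx. unfold add_idem. rewrite sadd_assoc, <- Hx. reflexivity. Qed.

Lemma regular_idem_r a x : a = a + x + a -> add_idem (x + a).
Proof.
  intro Hx. unfold add_idem.
  transitivity (x + (a + x + a)); [sr_assoc|]. rewrite <- Hx. reflexivity.
Qed.

Lemma inverse_pair a x : a = a + x + a ->
  a = a + (x + a + x) + a /\ x + a + x = (x + a + x) + a + (x + a + x).
Proof.
  intro Hx. split.
  - transitivity ((a + x + a) + x + a); [|sr_assoc]. rewrite <- Hx. exact Hx.
  - symmetry. transitivity (x + (a + x + a) + (x + a + x)); [sr_assoc|].
    rewrite <- Hx. transitivity (x + (a + x + a) + x); [sr_assoc|].
    rewrite <- Hx. reflexivity.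
Qed.

(* [h] is the identity of the group H-class of [a], and [h + x + h] the inverse of [a] in it. *)
Lemma group_element_of_unit a x h :
  a = a + x + a -> h + a = a -> a + h = a -> a + x + h = h -> h + x + a = h ->
  add_group_element a.
Proof.
  intros Hx HA AH AXH HXA. exists (h + x + h). split.
  - transitivity ((a + h) + x + (h + a)); [|sr_assoc]. rewrite AH, HA. exact Hx.
  - transitivity ((a + h) + x + h); [sr_assoc|].
    transitivity (h + x + (h + a)); [|sr_assoc].
    rewrite AH, HA, AXH, HXA. reflexivity.
Qed.

Lemma group_unit_nmul' k a y : a = a + y + a -> a + y = y + a ->
  a + y = nmul' k a + nmul' k y /\ a + y = nmul' k y + nmul' k a.
Proof.
  intros Y1 Y2. pose proof (regular_idem_l a y Y1) as Hi.
  rewrite <- !nmul'_add_distr by congruence. rewrite <- Y2, !nmul'_idem; easy.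
Qed.

Lemma group_inverse_normal a y : a = a + y + a -> a + y = y + a ->
  a = a + (y + a + y) + a /\ a + (y + a + y) = a + y /\
  (y + a + y) + a = a + y /\ y + a + y = (y + a + y) + a + (y + a + y).
Proof.
  intros Y1 Y2.
  assert (AYA : a + (y + a + y) = a + y).
  { transitivity ((a + y + a) + y); [sr_assoc|]. rewrite <- Y1. reflexivity. }
  assert (YAYA : (y + a + y) + a = a + y).
  { rewrite Y2. transitivity (y + (a + y + a)); [sr_assoc|]. rewrite <- Y1. reflexivity. }
  destruct (inverse_pair a y Y1) as [I1 I2]. tauto.
Qed.

Definition Lle a b := a = b \/ exists x, a = x + b.
Definition Rle a b := a = b \/ exists x, a = b + x.

Lemma Lle_trans a b c : Lle a b -> Lle b c -> Lle a c.
Proof.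
  intros [-> | [x ->]] [-> | [y ->]]; unfold Lle; auto; right.
  - exists y. reflexivity.
  - exists x. reflexivity.
  - exists (x + y). apply sadd_assoc.
Qed.

Lemma Rle_trans a b c : Rle a b -> Rle b c -> Rle a c.
Proof.
  intros [-> | [x ->]] [-> | [y ->]]; unfold Rle; auto; right.
  - exists y. reflexivity.
  - exists x. reflexivity.
  - exists (y + x). symmetry. apply sadd_assoc.
Qed.

Lemma Hplus_intro a b : Lle a b -> Lle b a -> Rle a b -> Rle b a -> Hplus R a b.
Proof. unfold Hplus, Lplus, Rplus, Lle, Rle. tauto. Qed.

Lemma Hplus_refl a : Hplus R a a.
Proof. apply Hplus_intro; left; reflexivity. Qed.

Lemma Hplus_sym a b : Hplus R a b -> Hplus R b a.
Proof. unfold Hplus, Lplus, Rplus. tauto. Qed.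

Lemma Hplus_trans a b c : Hplus R a b -> Hplus R b c -> Hplus R a c.
Proof.
  intros [[L1 L2] [R1 R2]] [[L3 L4] [R3 R4]].
  apply Hplus_intro; eapply Lle_trans || eapply Rle_trans; eassumption.
Qed.

Lemma Hplus_idem_eq u v : add_idem u -> add_idem v -> Hplus R u v -> u = v.
Proof.
  intros Hu Hv [[[E | [x E]] _] [_ [E' | [y E']]]]; [exact E | exact E | now symmetry |].
  rewrite <- (idem_fix_r v u x Hv E). exact (idem_fix_l u v y Hu E').
Qed.

Lemma group_mul_of_idem_mul (Hmi : forall e, add_idem e -> e * e = e) a y :
  a = a + y + a -> a + y = y + a -> a * (a + y) = a + y.
Proof.
  intros Y1 Y2. set (h := a + y).
  assert (Hh : add_idem h) by (apply regular_idem_l; exact Y1).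
  assert (HH : h * h = h) by (apply Hmi; exact Hh).
  assert (Hah : add_idem (a * h)) by (unfold add_idem; rewrite <- smul_addr, Hh; reflexivity).
  assert (E1 : h + a * h = a * h).
  { rewrite <- HH at 1. rewrite <- smul_addl. unfold h. rewrite <- Y1. reflexivity. }
  assert (E2 : h = y * h + a * h).
  { rewrite <- HH at 1. unfold h at 1. rewrite Y2, smul_addl. reflexivity. }
  rewrite <- E1. rewrite E2 at 1 3. rewrite <- sadd_assoc, Hah. reflexivity.
Qed.

Lemma compl_regular_of_group (Hmi : forall e, add_idem e -> e * e = e) a :
  add_group_element a -> compl_regular R a.
Proof.
  intros [y [Y1 Y2]]. exists y. repeat split; try assumption.
  apply group_mul_of_idem_mul; assumption.
Qed.

End AdditiveSemigroup.

Section QuasiCompletelyRegular.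
Variable R : semiring.
Implicit Types a b e p q s u v w x y z : R.
Hypothesis Hq : quasi_compl_regular R.

Lemma qcr_add_quasi_regular : add_quasi_regular R.
Proof.
  intro a. destruct (Hq a) as (n & Hn & x & _ & Hx & _).
  exists n. split; [exact Hn|]. exists x. exact Hx.
Qed.

Lemma qcr_group_multiple a : exists k, add_group_element R (nmul' k a).
Proof.
  destruct (Hq a) as [[|k] [Hk [y [_ [Y1 [Y2 _]]]]]]; [lia|].
  exists k, y. split; assumption.
Qed.

Lemma qcr_idem_mul_idem e : add_idem e -> e * e = e.
Proof.
  intro He. destruct (Hq e) as [[|n] [Hn [x [_ [H1 [H2 H3]]]]]]; [lia|].
  change (nmul (S n) e) with (nmul' n e) in *. rewrite nmul'_idem in H1, H2, H3 by exact He.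
  assert (Ex : e + x = e).
  { transitivity (e + (e + x)); [rewrite sadd_assoc, He; reflexivity|].
    rewrite H2, sadd_assoc. symmetry. exact H1. }
  rewrite Ex in H3. exact H3.
Qed.

Lemma sandwich_nmul' b s q k : b = s + b + q -> b = nmul' k s + b + nmul' k q.
Proof.
  intro H. induction k as [|k IH]; [exact H|].
  rewrite IH at 1. rewrite H at 1. rewrite nmul'_succ_r. simpl. sr_assoc.
Qed.

Lemma qcr_stable_r b s q : b = s + b + q -> exists r, b = b + q + r.
Proof.
  intro H. destruct (qcr_group_multiple q) as [k [y [Y1 Y2]]].
  set (Q := nmul' k q) in *.
  assert (B : b = nmul' k s + b + Q) by (apply sandwich_nmul'; exact H).
  assert (BE : b = b + (Q + y)).
  { assert (QE : Q + (Q + y) = Q) by (rewrite Y2, sadd_assoc; symmetry; exact Y1).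
    rewrite B at 2. rewrite <- sadd_assoc, QE. exact B. }
  destruct (nmul'_add_head R k q y) as [r Hr].
  exists r. rewrite BE at 1. unfold Q. rewrite Hr. apply sadd_assoc.
Qed.

Lemma qcr_stable_l b s q : b = q + b + s -> exists r, b = r + q + b.
Proof.
  intro H. destruct (qcr_group_multiple q) as [k [y [Y1 Y2]]].
  set (Q := nmul' k q) in *.
  assert (B : b = Q + b + nmul' k s) by (apply sandwich_nmul'; exact H).
  assert (BE : b = (y + Q) + b).
  { assert (EQ : (y + Q) + Q = Q) by (rewrite <- Y2; symmetry; exact Y1).
    rewrite B at 2. rewrite !sadd_assoc, EQ. exact B. }
  destruct (nmul'_add_last R k q y) as [r Hr].
  exists r. rewrite BE at 1. unfold Q. rewrite Hr. reflexivity.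
Qed.

Lemma qcr_idem_sandwich x y al be :
  add_idem x -> add_idem (x + y + x) -> x = al + (x + y + x) + be -> x + y + x = x.
Proof.
  intros Hx Hz D. set (z := x + y + x) in *.
  destruct (qcr_stable_r x al (y + x + be)) as [r Hr].
  { rewrite D at 1. unfold z. sr_assoc. }
  destruct (qcr_stable_l x be (al + x + y)) as [r' Hr'].
  { rewrite D at 1. unfold z. sr_assoc. }
  assert (ZX : z + x = x).
  { apply (idem_fix_l R z x (be + r) Hz). rewrite Hr at 1. unfold z. sr_assoc. }
  assert (XZ : x + z = x).
  { apply (idem_fix_r R z x (r' + al) Hz). rewrite Hr' at 1. unfold z. sr_assoc. }
  assert (XZ' : x + z = z) by (apply (idem_fix_l R x z (y + x) Hx); unfold z; sr_assoc).
  rewrite <- XZ'. exact XZ.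
Qed.

(* [e * a] is the identity of the group H-class of [a]; [e] is that of the group containing
   [nmul' k a]. *)
Lemma qcr_unit_l a x e k : a = a + x + a -> add_idem e ->
  e + nmul' k a = nmul' k a -> (a + x) + e = e ->
  (a + x) + e * a = e * a /\ e * a + a = a.
Proof.
  intros Hx He EP FE. set (f := a + x) in *. set (p := nmul' k a) in *.
  assert (Ff : add_idem f) by (apply regular_idem_l; exact Hx).
  assert (FF : f * f = f) by (apply qcr_idem_mul_idem; exact Ff).
  assert (FA : f + a = a) by (symmetry; exact Hx).
  assert (EFf : f + e * f = e * f).
  { rewrite <- FF at 1. rewrite <- smul_addl, FE. reflexivity. }
  assert (PF : p * f = a * f).
  { unfold p. rewrite nmul'_mul_r. apply nmul'_idem.
    unfold add_idem. rewrite <- smul_addr, Ff. reflexivity. }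
  assert (B : e * a = e * f + e * a) by (rewrite <- smul_addr, FA; reflexivity).
  split.
  - apply (idem_fix_l R f _ (e * f + e * a) Ff). rewrite B at 1. rewrite <- EFf at 1. sr_assoc.
  - assert (Hb : add_idem (e * a)) by (unfold add_idem; rewrite <- smul_addl, He; reflexivity).
    apply (idem_fix_l R _ a (e * x + a * f + x * f + a) Hb).
    transitivity (f * f + a); [rewrite FF; symmetry; exact FA|].
    transitivity (e * f + p * f + x * f + a).
    + rewrite <- smul_addl, EP, PF. unfold f at 1. rewrite smul_addl. reflexivity.
    + rewrite PF. change (e * f) with (e * (a + x)). rewrite smul_addr. sr_assoc.
Qed.

Lemma qcr_unit_r a x e k : a = a + x + a -> add_idem e ->
  nmul' k a + e = nmul' k a -> e + (x + a) = e ->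
  e * a + (x + a) = e * a /\ a + e * a = a.
Proof.
  intros Hx He PE EG. set (g := x + a) in *. set (p := nmul' k a) in *.
  assert (Gg : add_idem g) by (apply regular_idem_r; exact Hx).
  assert (GG : g * g = g) by (apply qcr_idem_mul_idem; exact Gg).
  assert (AG : a + g = a) by (unfold g; rewrite sadd_assoc; symmetry; exact Hx).
  assert (EGg : e * g + g = e * g).
  { rewrite <- GG at 2. rewrite <- smul_addl, EG. reflexivity. }
  assert (PG : p * g = a * g).
  { unfold p. rewrite nmul'_mul_r. apply nmul'_idem.
    unfold add_idem. rewrite <- smul_addr, Gg. reflexivity. }
  assert (B : e * a = e * a + e * g) by (rewrite <- smul_addr, AG; reflexivity).
  split.
  - apply (idem_fix_r R g _ (e * a + e * g) Gg). rewrite B at 1. rewrite <- EGg at 1. sr_assoc.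
  - assert (Hb : add_idem (e * a)) by (unfold add_idem; rewrite <- smul_addl, He; reflexivity).
    apply (idem_fix_r R _ a (a + x * g + a * g + e * x) Hb).
    transitivity (a + g * g); [rewrite GG; symmetry; exact AG|].
    transitivity (a + x * g + p * g + e * g).
    + rewrite <- sadd_assoc, <- smul_addl, PE, PG. unfold g at 1. rewrite smul_addl. sr_assoc.
    + rewrite PG. change (e * g) with (e * (x + a)). rewrite smul_addr. sr_assoc.
Qed.

Lemma qcr_regular_group_element a : add_regular a -> add_group_element R a.
Proof.
  intros [x Hx]. destruct (qcr_group_multiple a) as [k [y [Y1 Y2]]].
  set (p := nmul' k a) in *.
  assert (He : add_idem (p + y)) by (apply regular_idem_l; exact Y1).
  assert (EP : (p + y) + p = p) by (symmetry; exact Y1).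
  assert (PE : p + (p + y) = p) by (rewrite Y2, sadd_assoc; symmetry; exact Y1).
  assert (FP : (a + x) + p = p) by (apply nmul'_absorb_l; symmetry; exact Hx).
  assert (PG : p + (x + a) = p).
  { apply nmul'_absorb_r. rewrite sadd_assoc. symmetry. exact Hx. }
  destruct (qcr_unit_l a x (p + y) k Hx He EP) as [FB BA].
  { rewrite sadd_assoc, FP. reflexivity. }
  destruct (qcr_unit_r a x (p + y) k Hx He PE) as [BG AB].
  { rewrite Y2, <- sadd_assoc, PG. reflexivity. }
  apply (group_element_of_unit R a x ((p + y) * a)); try assumption.
  rewrite <- sadd_assoc. exact BG.
Qed.

End QuasiCompletelyRegular.

Section Divisibility.
Variable R : semiring.
Implicit Types a b c s t u v w x y z : R.
Hypothesis Hq : quasi_compl_regular R.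

Definition dvdm a b := exists n s t, nmul' n b = s + a + t.

Lemma dvdm_refl a : dvdm a a.
Proof. exists 2, a, a. simpl. sr_assoc. Qed.

Lemma dvdm_inner u a v b : dvdm (u + a + v) b -> dvdm a b.
Proof. intros (n & s & t & H). exists n, (s + u), (v + t). rewrite H. sr_assoc. Qed.

Lemma dvdm_inner_l a v b : dvdm (a + v) b -> dvdm a b.
Proof. intros (n & s & t & H). exists n, s, (v + t). rewrite H. sr_assoc. Qed.

Lemma dvdm_add_l a b : dvdm a (a + b).
Proof. exists 2, (a + b), (b + (a + b)). simpl. sr_assoc. Qed.

Lemma dvdm_add_r a b : dvdm b (a + b).
Proof. exists 1, a, (a + b). simpl. sr_assoc. Qed.

Lemma dvdm_add_comm a b : dvdm (a + b) (b + a).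
Proof. exists 1, b, a. simpl. sr_assoc. Qed.

Lemma dvdm_mul_r a b c : dvdm a b -> dvdm (a * c) (b * c).
Proof.
  intros (n & s & t & H). exists n, (s * c), (t * c).
  rewrite <- nmul'_mul_r, H, !smul_addl. reflexivity.
Qed.

Lemma dvdm_mul_l a b c : dvdm a b -> dvdm (c * a) (c * b).
Proof.
  intros (n & s & t & H). exists n, (c * s), (c * t).
  rewrite <- nmul'_mul_l, H, !smul_addr. reflexivity.
Qed.

Lemma dvdm_nmul'_l a k : dvdm (nmul' k a) a.
Proof.
  exists (S (S k)), a, a. change (a + nmul' (S k) a = a + nmul' k a + a).
  rewrite nmul'_succ_r. sr_assoc.
Qed.

Lemma dvdm_nmul'_r a k : dvdm a (nmul' k a).
Proof.
  destruct k as [|k]; [apply dvdm_refl|].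
  exists 2, (nmul' (S k) a), (nmul' k a + nmul' (S k) a). simpl. sr_assoc.
Qed.

Lemma idem_factor_double E a u v :
  add_idem E -> E = u + a + v -> exists u' v', E = u' + (a + a) + v'.
Proof.
  intros HE H. set (h := a + v + E + u).
  assert (Hh : add_idem h).
  { unfold add_idem, h. transitivity (a + v + (E + (u + a + v) + E) + u); [sr_assoc|].
    rewrite <- H, !HE. reflexivity. }
  set (p := h + a).
  assert (Hp : p = p + (v + E + u) + p).
  { unfold p. transitivity (h + (a + v + E + u) + h + a); [|sr_assoc].
    fold h. rewrite !Hh. reflexivity. }
  assert (HE2 : E = u + p + v).
  { transitivity ((u + a + v) + E + (u + a + v)); [rewrite <- H, !HE; reflexivity|].
    unfold p, h. sr_assoc. }
  destruct (qcr_regular_group_element R Hq p) as [y [Y1 Y2]]; [exists (v + E + u); exact Hp|].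
  assert (Hpp : p = p + p + y) by (rewrite <- sadd_assoc, Y2, sadd_assoc; exact Y1).
  exists (u + h), (v + E + u + a + y + v).
  rewrite HE2 at 1. rewrite Hpp. unfold p, h. sr_assoc.
Qed.

Lemma dvdm_double a b : dvdm a b -> dvdm (a + a) b.
Proof.
  intros (n & s & t & H).
  destruct (qcr_group_multiple R Hq (nmul' n b)) as [j [z [P1 P2]]].
  destruct (nmul'_add_head R j (nmul' n b) z) as [w Hw].
  set (P := nmul' j (nmul' n b)) in *.
  assert (HE : add_idem (P + z)) by (apply regular_idem_l; exact P1).
  destruct (idem_factor_double (P + z) a (P + z + s) (t + w) HE) as [u [v Huv]].
  { rewrite <- HE at 1. rewrite Hw at 2. rewrite H. sr_assoc. }
  exists (j * n + j + n)%nat, u, (v + P).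
  rewrite <- nmul'_nmul'. fold P. transitivity (P + z + P); [exact P1|].
  rewrite Huv. sr_assoc.
Qed.

Lemma dvdm_nmul' a b k : dvdm a b -> dvdm (nmul' k a) b.
Proof.
  intro H. induction k as [|k IH]; [exact H|].
  apply dvdm_double in IH. rewrite <- nmul'_add in IH.
  destruct k as [|k]; [exact IH|].
  destruct (nmul'_split R (S (S k)) (S k + S k + 1)%nat a) as [E _]; [lia|].
  rewrite E in IH. exact (dvdm_inner_l _ _ _ IH).
Qed.

Lemma dvdm_trans a b c : dvdm a b -> dvdm b c -> dvdm a c.
Proof.
  intros (n & s & t & H) Hbc.
  apply (dvdm_nmul' b c (S (S n))) in Hbc.
  assert (E : nmul' (S (S n)) b = b + s + a + (t + b)).
  { change (b + nmul' (S n) b = b + s + a + (t + b)). rewrite nmul'_succ_r, H. sr_assoc. }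
  rewrite E in Hbc. exact (dvdm_inner _ _ _ _ Hbc).
Qed.

Lemma dvdm_add x y z : dvdm x z -> dvdm y z -> dvdm (x + y) z.
Proof.
  intros (n & s & t & H1) (m & s' & t' & H2).
  set (w := x + (t + s') + y).
  assert (Hw : dvdm (w + w) z).
  { apply dvdm_double. exists (n + m + 1)%nat, s, t'.
    rewrite nmul'_add, H1, H2. unfold w. sr_assoc. }
  assert (Hyx : dvdm (y + x) z).
  { apply (dvdm_inner (x + (t + s')) _ (t + s' + y)).
    replace (x + (t + s') + (y + x) + (t + s' + y)) with (w + w) by (unfold w; sr_assoc).
    exact Hw. }
  apply dvdm_double in Hyx. apply (dvdm_inner y _ x).
  replace (y + (x + y) + x) with (y + x + (y + x)) by sr_assoc. exact Hyx.
Qed.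

Lemma dvdm_add_compat_r a b c : dvdm a b -> dvdm (a + c) (b + c).
Proof.
  intro H. apply dvdm_add; [|apply dvdm_add_r].
  apply dvdm_trans with b; [exact H | apply dvdm_add_l].
Qed.

Lemma dvdm_add_compat_l a b c : dvdm a b -> dvdm (c + a) (c + b).
Proof.
  intro H. apply dvdm_add; [apply dvdm_add_l|].
  apply dvdm_trans with b; [exact H | apply dvdm_add_r].
Qed.

Lemma regular_add_r b t : add_regular b -> dvdm (b + t) b -> add_regular (b + t).
Proof.
  intros Hb (n & s & u & Hd).
  destruct (qcr_regular_group_element R Hq b Hb) as [y [Y1 Y2]].
  destruct (group_unit_nmul' R n b y Y1 Y2) as [_ E2].
  destruct (qcr_stable_r R Hq b (nmul' n y + s) (t + u + b)) as [r Hr].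
  { transitivity (b + y + b); [exact Y1|]. rewrite E2, Hd. sr_assoc. }
  exists (u + b + r + y).
  transitivity (b + y + b + t); [rewrite <- Y1; reflexivity|].
  rewrite Hr at 1. sr_assoc.
Qed.

Lemma regular_add_l b t : add_regular b -> dvdm (t + b) b -> add_regular (t + b).
Proof.
  intros Hb (n & s & u & Hd).
  destruct (qcr_regular_group_element R Hq b Hb) as [y [Y1 Y2]].
  destruct (group_unit_nmul' R n b y Y1 Y2) as [E1 _].
  destruct (qcr_stable_l R Hq b (u + nmul' n y) (b + s + t)) as [r Hr].
  { transitivity (b + (y + b)); [rewrite sadd_assoc; exact Y1|].
    rewrite <- Y2, E1, Hd. sr_assoc. }
  exists (y + r + b + s).
  transitivity (t + (b + y + b)); [rewrite <- Y1; reflexivity|].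
  rewrite Hr at 2. sr_assoc.
Qed.

End Divisibility.

Section Construction.
Variable R : semiring.
Implicit Types a b c e f t u w x y : R.
Hypothesis Hq : quasi_compl_regular R.
Hypothesis Hidem : forall e f, add_idem e -> add_idem f ->
  add_group_element R (e + f) -> add_idem (e + f).

Definition arch a b := dvdm R a b /\ dvdm R b a.

Lemma arch_refl a : arch a a.
Proof. split; apply dvdm_refl. Qed.

Lemma arch_sym a b : arch a b -> arch b a.
Proof. intros [H1 H2]. split; assumption. Qed.

Lemma arch_trans a b c : arch a b -> arch b c -> arch a c.
Proof. intros [H1 H2] [H3 H4]. split; eapply (dvdm_trans R Hq); eassumption. Qed.

Lemma arch_add_r a b c : arch a b -> arch (a + c) (b + c).
Proof. intros [H1 H2]. split; apply (dvdm_add_compat_r R Hq); assumption. Qed.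

Lemma arch_add_l a b c : arch a b -> arch (c + a) (c + b).
Proof. intros [H1 H2]. split; apply (dvdm_add_compat_l R Hq); assumption. Qed.

Lemma arch_mul_r a b c : arch a b -> arch (a * c) (b * c).
Proof. intros [H1 H2]. split; apply dvdm_mul_r; assumption. Qed.

Lemma arch_mul_l a b c : arch a b -> arch (c * a) (c * b).
Proof. intros [H1 H2]. split; apply dvdm_mul_l; assumption. Qed.

Lemma arch_congruence : congruence R arch.
Proof.
  split; [exact arch_refl|]. split; [exact arch_sym|]. split; [exact arch_trans|].
  intros a b c H.
  split; [apply arch_add_r | split; [apply arch_add_l |]]; [exact H..|].
  split; [apply arch_mul_r | apply arch_mul_l]; exact H.
Qed.

Lemma arch_nmul' a k : arch a (nmul' k a).
Proof. split; [apply dvdm_nmul'_r | apply dvdm_nmul'_l]. Qed.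

Lemma arch_unit b y : b = b + y + b -> arch b (b + y).
Proof.
  intro Y. split; [apply dvdm_add_l|].
  apply (dvdm_inner_l R _ b). rewrite <- Y. apply dvdm_refl.
Qed.

Lemma arch_inverse b y : b = b + y + b -> arch b (y + b + y).
Proof.
  intro Y. split.
  - exists 0, y, y. reflexivity.
  - exists 0, b, b. exact (proj1 (inverse_pair R b y Y)).
Qed.

Lemma arch_sq a : arch (a * a) a.
Proof.
  destruct (qcr_group_multiple R Hq a) as [k [y [Y1 _]]].
  assert (Hae : arch a (nmul' k a + y)).
  { apply arch_trans with (nmul' k a); [apply arch_nmul' | apply arch_unit; exact Y1]. }
  assert (Hsq : (nmul' k a + y) * (nmul' k a + y) = nmul' k a + y).
  { apply (qcr_idem_mul_idem R Hq). apply regular_idem_l. exact Y1. }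
  apply arch_trans with ((nmul' k a + y) * a); [apply arch_mul_r; exact Hae|].
  apply arch_trans with ((nmul' k a + y) * (nmul' k a + y)); [apply arch_mul_l; exact Hae|].
  rewrite Hsq. apply arch_sym. exact Hae.
Qed.

Lemma arch_b_lattice : quotient_b_lattice R arch.
Proof.
  split; [exact arch_sq|]. split.
  - intro a. split; [exact (dvdm_nmul'_l R a 1) | apply dvdm_add_l].
  - intros a b. split; apply dvdm_add_comm.
Qed.

Lemma arch_add a b c : arch a b -> arch a c -> arch a (b + c).
Proof.
  intros H1 H2. apply arch_trans with (a + a); [apply arch_sym, arch_b_lattice|].
  apply arch_trans with (b + a); [apply arch_add_r | apply arch_add_l]; assumption.
Qed.

Lemma arch_mul a b c : arch a b -> arch a c -> arch a (b * c).
Proof.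
  intros H1 H2. apply arch_trans with (a * a); [apply arch_sym, arch_sq|].
  apply arch_trans with (b * a); [apply arch_mul_r | apply arch_mul_l]; assumption.
Qed.

Lemma arch_class_subsemiring a : subsemiring R (arch a).
Proof.
  split; [exists a; apply arch_refl|].
  intros b c Hb Hc. split; [apply arch_add | apply arch_mul]; assumption.
Qed.

Lemma idem_sum_regular e f :
  add_idem e -> add_idem f -> add_regular (e + f) -> add_idem (e + f).
Proof. intros He Hf H. apply Hidem; try assumption. apply (qcr_regular_group_element R Hq), H. Qed.

Lemma arch_idem_rect u w : add_idem u -> add_idem w -> arch u w -> u + w + u = u.
Proof.
  intros Hu Hw [Huw Hwu].
  assert (D1 : dvdm R (u + w) u) by (apply (dvdm_add R Hq); [apply dvdm_refl | exact Hwu]).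
  assert (D2 : dvdm R (u + w + u) u) by (apply (dvdm_add R Hq); [exact D1 | apply dvdm_refl]).
  assert (I1 : add_idem (u + w)).
  { apply idem_sum_regular; try assumption.
    apply (regular_add_r R Hq); [apply idem_regular; exact Hu | exact D1]. }
  assert (I2 : add_idem (u + w + u)).
  { apply idem_sum_regular; try assumption.
    apply (regular_add_l R Hq); [apply idem_regular; exact Hu | exact D2]. }
  destruct D2 as (n & s & t & D). rewrite (nmul'_idem R n u Hu) in D.
  exact (qcr_idem_sandwich R Hq u w s t Hu I2 D).
Qed.

Definition arch_core a b := arch a b /\ add_regular b.

Lemma core_bi_ideal a b c : arch_core a b -> arch a c ->
  arch_core a (b + c) /\ arch_core a (c + b) /\ arch_core a (b * c) /\ arch_core a (c * b).
Proof.
  intros [Hab Hb] Hac.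
  assert (Hbc : arch b c) by (apply arch_trans with a; [apply arch_sym|]; assumption).
  destruct Hbc as [Dbc Dcb].
  split; [|split; [|split]]; split.
  - apply arch_add; assumption.
  - apply (regular_add_r R Hq); [exact Hb|].
    apply (dvdm_add R Hq); [apply dvdm_refl | exact Dcb].
  - apply arch_add; assumption.
  - apply (regular_add_l R Hq); [exact Hb|].
    apply (dvdm_add R Hq); [exact Dcb | apply dvdm_refl].
  - apply arch_mul; assumption.
  - apply regular_mul_r. exact Hb.
  - apply arch_mul; assumption.
  - apply regular_mul_l. exact Hb.
Qed.

Lemma core_compl_regular a b : arch_core a b -> compl_regular_in R (arch_core a) b.
Proof.
  intros [Hab Hb].
  destruct (qcr_regular_group_element R Hq b Hb) as [y [Y1 Y2]].
  destruct (group_inverse_normal R b y Y1 Y2) as (I1 & I2 & I3 & I4).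
  exists (y + b + y). split; [split|].
  - apply arch_trans with b; [exact Hab | apply arch_inverse; exact Y1].
  - exists b. exact I4.
  - split; [exact I1|]. split; [rewrite I2, I3; reflexivity|].
    rewrite I2. apply (group_mul_of_idem_mul R (qcr_idem_mul_idem R Hq)); assumption.
Qed.

Lemma core_J a b c : arch_core a b -> arch_core a c -> in_J_ideal R (arch_core a) b c.
Proof.
  intros Kb [Hac Hc]. pose proof Kb as [Hab Hb].
  destruct (qcr_regular_group_element R Hq b Hb) as [y [Y1 Y2]].
  destruct (qcr_regular_group_element R Hq c Hc) as [y' [Y1' Y2']].
  destruct (group_inverse_normal R c y' Y1' Y2') as (_ & _ & I3 & _).
  assert (Hcy : arch a (y' + c + y')).
  { apply arch_trans with c; [exact Hac | apply arch_inverse; exact Y1']. }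
  assert (Hby : arch a (b + y)).
  { apply arch_trans with b; [exact Hab | apply arch_unit; exact Y1]. }
  assert (Eb : add_idem (b + y)) by (apply regular_idem_l; exact Y1).
  assert (BE : b + (b + y) = b) by (rewrite Y2, sadd_assoc; symmetry; exact Y1).
  assert (Rect : (b + y) + (c + y') + (b + y) = b + y).
  { apply arch_idem_rect; [exact Eb | apply regular_idem_l; exact Y1' |].
    apply arch_trans with a; [apply arch_sym; exact Hby|].
    apply arch_trans with c; [exact Hac | apply arch_unit; exact Y1']. }
  right; right; right. exists (b + (y' + c + y')), (b + y). split; [|split].
  - exact (proj1 (core_bi_ideal a b _ Kb Hcy)).
  - split; [exact Hby | apply idem_regular; exact Eb].
  - transitivity (b + ((b + y) + (c + y') + (b + y))); [rewrite Rect; symmetry; exact BE|].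
    transitivity (b + (b + y) + (c + y') + (b + y)); [sr_assoc|]. rewrite BE.
    transitivity (b + ((y' + c + y') + c) + (b + y)); [rewrite I3; reflexivity | sr_assoc].
Qed.

Lemma core_nmul a t : arch a t -> exists n, 0 < n /\ arch_core a (nmul n t).
Proof.
  intro Ht. destruct (qcr_group_multiple R Hq t) as [k [z [Z1 _]]].
  exists (S k). split; [lia|]. split.
  - apply arch_trans with t; [exact Ht | apply arch_nmul'].
  - exists z. exact Z1.
Qed.

Lemma core_subsemiring a : subsemiring R (arch_core a).
Proof.
  split.
  - destruct (core_nmul a a (arch_refl a)) as [n [_ Hn]]. exists (nmul n a). exact Hn.
  - intros b c Hb Hc. destruct (core_bi_ideal a b c Hb (proj1 Hc)) as (H1 & _ & H3 & _).
    split; assumption.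
Qed.

Lemma core_rect_skew_ring a : rect_skew_ring R (arch_core a).
Proof.
  split; [split; [apply core_subsemiring | split]|].
  - exact (core_compl_regular a).
  - intros b c Hb Hc. split; apply core_J; assumption.
  - intros e f He Hf Hee Hff. apply idem_sum_regular; try assumption.
    exact (proj2 (proj1 (core_bi_ideal a e f He (proj1 Hf)))).
Qed.

Lemma arch_class_nil_extension a : nil_extension R (arch a) (arch_core a).
Proof.
  split; [apply arch_class_subsemiring|]. split; [apply core_subsemiring|].
  split; [intros b Hb; exact (proj1 Hb)|].
  split; [exact (core_bi_ideal a) | exact (core_nmul a)].
Qed.

Theorem b_lattice_of_arch : b_lattice_nilext_rsr R.
Proof.
  exists arch. split; [exact arch_congruence|]. split; [exact arch_b_lattice|].
  intro a. split; [apply arch_class_subsemiring|].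
  exists (arch_core a). split; [apply core_rect_skew_ring | apply arch_class_nil_extension].
Qed.

End Construction.

Section CharacterizingProperties.
Variable R : semiring.
Implicit Types a b e f h x y : R.

Lemma ex_is_m (Haq : add_quasi_regular R) a : exists m, is_m R a m.
Proof.
  destruct (dec_inh_nat_subset_has_unique_least_element
              (fun n => 0 < n /\ add_regular (nmul n a))) as (m & [[Hm Hreg] Hmin] & _).
  - intro n. apply classic.
  - exact (Haq a).
  - exists m. split; [exact Hm|]. split; [exact Hreg|].
    intros k Hk Hr. apply Hmin. split; assumption.
Qed.

Lemma is_m_regular a m : add_regular a -> is_m R a m -> m = 1.
Proof. intros Ha (Hm & _ & Hmin). specialize (Hmin 1 Nat.lt_0_1 Ha). lia. Qed.

Lemma group_element_periodic_idem a n : add_group_element R a ->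
  0 < n -> nmul n a = nmul (n + 1) a -> add_idem a.
Proof.
  intros [y [Y1 Y2]] Hn. destruct n as [|n]; [lia|].
  rewrite Nat.add_1_r. change (nmul' n a = nmul' (S n) a -> add_idem a). intro Hper.
  assert (E : a = a + y).
  { destruct (group_unit_nmul' R n a y Y1 Y2) as [_ E2].
    rewrite Y1 at 1. rewrite E2, <- sadd_assoc, <- nmul'_succ_r, <- Hper. reflexivity. }
  unfold add_idem. rewrite E at 1. symmetry. exact Y1.
Qed.

Lemma Hstar_idem_mul_idem (Hst : forall b : R, Hstar (b * b) b) h : add_idem h -> h * h = h.
Proof.
  intro Hh.
  assert (Hhh : add_idem (h * h)) by (unfold add_idem; rewrite <- smul_addr, Hh; reflexivity).
  destruct (Hst h) as [(m1 & n1 & M1 & N1 & L) (m2 & n2 & M2 & N2 & Rr)].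
  rewrite (is_m_regular _ _ (idem_regular R _ Hhh) M1),
          (is_m_regular _ _ (idem_regular R _ Hh) N1) in L.
  rewrite (is_m_regular _ _ (idem_regular R _ Hhh) M2),
          (is_m_regular _ _ (idem_regular R _ Hh) N2) in Rr.
  apply Hplus_idem_eq; [exact Hhh | exact Hh | split; assumption].
Qed.

Section DoubledInverse.
Hypothesis H3 : forall a x : R, a = a + x + a -> a = a + nmul 2 x + nmul 2 a.

(* [a + x + x + a] is the identity of the group H-class of [a]. *)
Lemma doubled_inverse_group_element a : add_regular a -> add_group_element R a.
Proof.
  intros [x0 H0]. destruct (inverse_pair R a x0 H0) as [A1 A2].
  set (x := x0 + a + x0) in *. clearbody x.
  pose proof (H3 a x A1) as B1. pose proof (H3 x a A2) as B2.
  change (a = a + (x + x) + (a + a)) in B1. change (x = x + (a + a) + (x + x)) in B2.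
  apply (group_element_of_unit R a x (a + x + x + a) A1).
  - symmetry. rewrite B1 at 1. sr_assoc.
  - transitivity (a + (x + (a + a) + (x + x)) + a); [|rewrite <- B2; symmetry; exact A1].
    transitivity ((a + x + a) + a + x + x + a); [rewrite <- A1|]; sr_assoc.
  - transitivity ((a + x + a) + x + x + a); [sr_assoc|]. rewrite <- A1. reflexivity.
  - transitivity (a + x + x + (a + x + a)); [sr_assoc|]. rewrite <- A1. reflexivity.
Qed.

Lemma doubled_inverse_idem_sum e f : add_idem e -> add_idem f ->
  add_regular (e + f) -> add_idem (e + f).
Proof.
  intros He Hf [y Y]. set (a := e + f) in *.
  assert (AF : a + f = a) by (unfold a; rewrite <- sadd_assoc, Hf; reflexivity).
  assert (EA : e + a = a) by (unfold a; rewrite sadd_assoc, He; reflexivity).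
  assert (X : a = a + (f + y + e) + a).
  { transitivity ((a + f) + y + (e + a)); [rewrite AF, EA; exact Y | sr_assoc]. }
  pose proof (H3 a _ X) as B. change (a = a + ((f + y + e) + (f + y + e)) + (a + a)) in B.
  unfold add_idem. symmetry. rewrite B at 1.
  transitivity ((a + f) + y + (e + f) + y + (e + a) + a); [sr_assoc|].
  rewrite AF, EA. fold a. rewrite <- !Y. reflexivity.
Qed.

Lemma doubled_inverse_qcr (Haq : add_quasi_regular R) (Hst : forall b : R, Hstar (b * b) b) :
  quasi_compl_regular R.
Proof.
  intro a. destruct (Haq a) as (n & Hn & Hreg). exists n. split; [exact Hn|].
  apply (compl_regular_of_group R (Hstar_idem_mul_idem Hst)).
  exact (doubled_inverse_group_element _ Hreg).
Qed.

End DoubledInverse.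
End CharacterizingProperties.

Section RectSkewRing.
Variable R : semiring.
Implicit Types a e t u w x y z : R.
Hypothesis Hq : quasi_compl_regular R.
Variable K : R -> Prop.
Hypothesis HK : rect_skew_ring R K.

Lemma rsr_add x y : K x -> K y -> K (x + y).
Proof. intros Kx Ky. exact (proj1 (proj2 (proj1 (proj1 HK)) x y Kx Ky)). Qed.

Lemma rsr_mul x y : K x -> K y -> K (x * y).
Proof. intros Kx Ky. exact (proj2 (proj2 (proj1 (proj1 HK)) x y Kx Ky)). Qed.

Lemma rsr_compl_regular x : K x -> compl_regular_in R K x.
Proof. exact (proj1 (proj2 (proj1 HK)) x). Qed.

Lemma rsr_idem_add x y : K x -> K y -> add_idem x -> add_idem y -> add_idem (x + y).
Proof. exact (proj2 HK x y). Qed.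

Lemma rsr_factor x z : K x -> K z -> exists al be, x = al + z + be.
Proof.
  intros Kx Kz. destruct (rsr_compl_regular x Kx) as (r & _ & Hr & _).
  assert (X : x = (x + r) + x + (r + x)).
  { rewrite Hr at 1. rewrite Hr at 1. sr_assoc. }
  destruct (proj2 (proj2 (proj1 HK)) x z Kx Kz)
    as [[E | [[a [_ E]] | [[b [_ E]] | (a & b & _ & _ & E)]]] _]; rewrite E in X at 3.
  - exists (x + r), (r + x). exact X.
  - exists (x + r + a), (r + x). rewrite X at 1. sr_assoc.
  - exists (x + r), (b + (r + x)). rewrite X at 1. sr_assoc.
  - exists (x + r + a), (b + (r + x)). rewrite X at 1. sr_assoc.
Qed.

Lemma rsr_idem_rect x y : K x -> K y -> add_idem x -> add_idem y -> x + y + x = x.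
Proof.
  intros Kx Ky Hx Hy.
  assert (Hz : add_idem (x + y + x)) by (apply rsr_idem_add; auto using rsr_add, rsr_idem_add).
  destruct (rsr_factor x (x + y + x) Kx (rsr_add _ _ (rsr_add _ _ Kx Ky) Kx)) as (al & be & D).
  exact (qcr_idem_sandwich R Hq x y al be Hx Hz D).
Qed.

Lemma rsr_L x y t : K x -> K y -> y = t + x -> exists w, x = w + y.
Proof.
  intros Kx Ky E. destruct (rsr_factor x y Kx Ky) as (al & be & D).
  destruct (qcr_stable_l R Hq x be (al + t)) as [r Hr].
  { rewrite D at 1. rewrite E. sr_assoc. }
  exists (r + al). rewrite Hr at 1. rewrite E. sr_assoc.
Qed.

Lemma rsr_R x y t : K x -> K y -> y = x + t -> exists w, x = y + w.
Proof.
  intros Kx Ky E. destruct (rsr_factor x y Kx Ky) as (al & be & D).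
  destruct (qcr_stable_r R Hq x al (t + be)) as [r Hr].
  { rewrite D at 1. rewrite E. sr_assoc. }
  exists (be + r). rewrite Hr at 1. rewrite E. sr_assoc.
Qed.

(* Goes through the identity [u + z] of the group containing [u]. *)
Lemma rsr_Hplus_sq u : K u -> Hplus R (u * u) u.
Proof.
  intro Ku. destruct (rsr_compl_regular u Ku) as (z & Kz & U1 & U2 & U3).
  set (i := u + z) in *.
  assert (Ki : K i) by (apply rsr_add; assumption).
  assert (UI : u = u + i) by (rewrite U2, sadd_assoc; exact U1).
  assert (Hui : Hplus R u i).
  { apply Hplus_intro; right;
      [exists u; exact UI | exists z; exact U2 | exists u; exact U1 | exists z; reflexivity]. }
  assert (Kuu : K (u * u)) by (apply rsr_mul; assumption).
  assert (UU : u * u = u * u + i) by (rewrite <- U3, <- smul_addr, <- UI; reflexivity).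
  assert (IUU : i = u * u + u * z) by (rewrite <- smul_addr; symmetry; exact U3).
  destruct (rsr_L i (u * u) (u * u) Ki Kuu UU) as [w Hw].
  destruct (rsr_R (u * u) i (u * z) Kuu Ki IUU) as [w' Hw'].
  assert (Hiu : Hplus R i (u * u)) by (apply Hplus_intro; right; eauto).
  apply Hplus_sym, (Hplus_trans R _ i); assumption.
Qed.

Lemma rsr_Hplus_nmul' a j k : K (nmul' j a) -> K (nmul' k a) -> j <= k ->
  Hplus R (nmul' j a) (nmul' k a).
Proof.
  intros Kj Kk Hjk. destruct (Nat.eq_dec j k) as [-> | Hne]; [apply Hplus_refl|].
  destruct (nmul'_split R j k a) as [E1 E2]; [lia|].
  destruct (rsr_L _ _ _ Kj Kk E2) as [w Hw]. destruct (rsr_R _ _ _ Kj Kk E1) as [w' Hw'].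
  apply Hplus_intro; right; eauto.
Qed.

End RectSkewRing.

Section FromDecomposition.
Variable R : semiring.
Implicit Types a b e f g i p t u v x y : R.
Variable rho : R -> R -> Prop.
Hypothesis Hc : congruence R rho.
Hypothesis Hb : quotient_b_lattice R rho.
Hypothesis Hk : forall a, subsemiring R (rho a) /\
  exists K, rect_skew_ring R K /\ nil_extension R (rho a) K.

Lemma rho_refl a : rho a a.
Proof. exact (proj1 Hc a). Qed.

Lemma rho_sym a b : rho a b -> rho b a.
Proof. exact (proj1 (proj2 Hc) a b). Qed.

Lemma rho_trans a b c : rho a b -> rho b c -> rho a c.
Proof. exact (proj1 (proj2 (proj2 Hc)) a b c). Qed.

Lemma rho_add_r a b c : rho a b -> rho (a + c) (b + c).
Proof. intro H. exact (proj1 (proj2 (proj2 (proj2 Hc)) a b c H)). Qed.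

Lemma rho_add_l a b c : rho a b -> rho (c + a) (c + b).
Proof. intro H. exact (proj1 (proj2 (proj2 (proj2 (proj2 Hc)) a b c H))). Qed.

Lemma rho_absorb x y : rho (x + y + x) (x + y).
Proof.
  apply rho_trans with (x + (x + y)).
  - rewrite <- sadd_assoc. apply rho_add_l, (proj2 (proj2 Hb)).
  - rewrite sadd_assoc. apply rho_add_r, (proj1 (proj2 Hb)).
Qed.

Lemma rho_nmul' a k : rho a (nmul' k a).
Proof.
  induction k as [|k IH]; [apply rho_refl|].
  apply rho_trans with (a + a); [apply rho_sym, (proj1 (proj2 Hb)) | apply rho_add_l, IH].
Qed.

Lemma decomp_qcr : quasi_compl_regular R.
Proof.
  intro a. destruct (Hk a) as (_ & K & ((_ & HCR & _) & _) & (_ & _ & _ & _ & Nil)).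
  destruct (Nil a (rho_refl a)) as (n & Hn & Kn). destruct (HCR _ Kn) as (x & _ & Hx).
  exists n. split; [exact Hn|]. exists x. split; [exact I | exact Hx].
Qed.

Lemma regular_in_core a K t : nil_extension R (rho a) K -> rho a t -> add_regular t -> K t.
Proof.
  intros (_ & _ & _ & Bi & Nil) Ht [x Hx].
  assert (Hxt : rho a (x + t)).
  { apply rho_trans with t; [exact Ht|].
    apply rho_trans with (t + x); [|apply (proj2 (proj2 Hb))].
    rewrite Hx at 1. apply rho_absorb. }
  destruct (Nil _ Hxt) as ([|n] & Hn & Kn); [lia|]. change (K (nmul' n (x + t))) in Kn.
  destruct (Bi _ _ Kn Ht) as (_ & K2 & _).
  rewrite (add_nmul'_absorb R n t (x + t)) in K2; [exact K2|].
  rewrite sadd_assoc. symmetry. exact Hx.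
Qed.

Lemma core_idem_sandwich e f K i : rect_skew_ring R K -> nil_extension R (rho (e + f)) K ->
  K i -> add_idem i -> e + i = i -> i + f = i -> i + (e + f) + i = i.
Proof.
  intros HK (_ & _ & Sub & Bi & _) Ki Ii EI IF. set (g := e + f).
  assert (Kie : K (i + e)).
  { assert (T : rho g (i + e)).
    { apply rho_trans with (g + e); [|apply rho_add_r, Sub, Ki].
      apply rho_sym. unfold g. apply rho_absorb. }
    destruct (Bi i _ Ki T) as [K1 _]. rewrite sadd_assoc, Ii in K1. exact K1. }
  assert (Kfi : K (f + i)).
  { assert (T : rho g (f + i)).
    { apply rho_trans with (f + g); [|apply rho_add_l, Sub, Ki].
      apply rho_trans with (f + e); [apply (proj2 (proj2 Hb))|].
      apply rho_sym. replace (f + g) with (f + e + f) by (unfold g; sr_assoc). apply rho_absorb. }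
    destruct (Bi i _ Ki T) as (_ & K1 & _). rewrite <- sadd_assoc, Ii in K1. exact K1. }
  assert (Rect : i + ((i + e) + (f + i)) + i = i).
  { apply (rsr_idem_rect R decomp_qcr K HK); [exact Ki | | exact Ii |].
    { apply (rsr_add R K HK); assumption. }
    apply (rsr_idem_add R K HK); [exact Kie | exact Kfi | |]; unfold add_idem.
    - transitivity (i + (e + i) + e); [sr_assoc|]. rewrite EI, Ii. reflexivity.
    - transitivity (f + (i + f) + i); [sr_assoc|]. rewrite IF, <- sadd_assoc, Ii. reflexivity. }
  rewrite <- Rect at 3.
  transitivity ((i + i) + e + f + (i + i)); [rewrite !Ii; unfold g|]; sr_assoc.
Qed.

Lemma decomp_periodic_idem_sum e f : add_idem e -> add_idem f ->
  exists n, 0 < n /\ nmul n (e + f) = nmul (n + 1) (e + f).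
Proof.
  intros He Hf. set (g := e + f).
  destruct (Hk g) as (_ & K & HK & NE). pose proof NE as (_ & _ & _ & _ & Nil).
  destruct (Nil g (rho_refl g)) as ([|n] & Hn & Kp); [lia|].
  change (K (nmul' n g)) in Kp. set (p := nmul' n g) in *.
  exists (S n). split; [lia|]. rewrite Nat.add_1_r. change (p = g + p).
  destruct (rsr_compl_regular R K HK p Kp) as (z & Kz & P1 & P2 & _).
  set (i := p + z).
  assert (PI : p + i = p) by (unfold i; rewrite P2, sadd_assoc; symmetry; exact P1).
  assert (EP : e + p = p) by (apply nmul'_absorb_l; unfold g; rewrite sadd_assoc, He; reflexivity).
  assert (PF : p + f = p).
  { apply nmul'_absorb_r. unfold g. rewrite <- sadd_assoc, Hf. reflexivity. }
  assert (Sandwich : i + g + i = i).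
  { apply (core_idem_sandwich e f K i HK NE).
    - apply (rsr_add R K HK); assumption.
    - apply regular_idem_l. exact P1.
    - unfold i. rewrite sadd_assoc, EP. reflexivity.
    - unfold i. rewrite P2, <- sadd_assoc, PF. reflexivity. }
  assert (GP : g + p = p + g) by exact (nmul'_add_comm R 0 n g).
  assert (E : p + g + i = p + g) by (rewrite <- GP, <- sadd_assoc, PI; reflexivity).
  rewrite GP, <- E. transitivity (p + (i + g + i)); [rewrite Sandwich; symmetry; exact PI|].
  rewrite <- PI at 2. sr_assoc.
Qed.

Lemma decomp_doubled_inverse a x : a = a + x + a -> a = a + nmul 2 x + nmul 2 a.
Proof.
  intro Hx. change (a = a + (x + x) + (a + a)).
  destruct (Hk a) as (_ & K & HK & NE).
  assert (Tf : rho a (a + x)) by (pose proof (rho_absorb a x) as T; rewrite <- Hx in T; exact T).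
  assert (Tg : rho a (x + a)).
  { apply rho_trans with (a + x); [exact Tf | apply (proj2 (proj2 Hb))]. }
  assert (If : add_idem (a + x)) by (apply regular_idem_l; exact Hx).
  assert (Ig : add_idem (x + a)) by (apply regular_idem_r; exact Hx).
  assert (Kf : K (a + x)).
  { apply (regular_in_core a); [exact NE | exact Tf | apply idem_regular, If]. }
  assert (Kg : K (x + a)).
  { apply (regular_in_core a); [exact NE | exact Tg | apply idem_regular, Ig]. }
  pose proof (rsr_idem_rect R decomp_qcr K HK _ _ Kf Kg If Ig) as Rect.
  transitivity (a + x + (x + a) + (a + x) + a); [rewrite Rect; exact Hx|].
  transitivity (a + x + (x + a) + (a + x + a)); [sr_assoc|]. rewrite <- Hx. sr_assoc.
Qed.

Lemma decomp_Hplus_m b m1 m2 : is_m R (b * b) m1 -> is_m R b m2 ->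
  Hplus R (nmul m1 (b * b)) (nmul m2 b).
Proof.
  intros (Hm1 & Reg1 & Min1) (Hm2 & Reg2 & _).
  destruct (Hk b) as (_ & K & HK & NE).
  destruct m1 as [|k1]; [lia|]. destruct m2 as [|k2]; [lia|].
  change (Hplus R (nmul' k1 (b * b)) (nmul' k2 b)).
  change (add_regular (nmul' k1 (b * b))) in Reg1. change (add_regular (nmul' k2 b)) in Reg2.
  assert (Ku : K (nmul' k2 b)) by exact (regular_in_core b K _ NE (rho_nmul' b k2) Reg2).
  assert (Kv : K (nmul' k1 (b * b))).
  { apply (regular_in_core b K _ NE); [|exact Reg1].
    apply rho_trans with (b * b); [apply rho_sym, (proj1 Hb) | apply rho_nmul']. }
  assert (Kuu : K (nmul' k2 b * nmul' k2 b)) by (apply (rsr_mul R K HK); exact Ku).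
  rewrite nmul'_mul in Kuu.
  assert (Hle : k1 <= k2 * k2 + k2 + k2).
  { destruct (rsr_compl_regular R K HK _ Kuu) as (r & _ & Hr & _).
    enough (S k1 <= S (k2 * k2 + k2 + k2)) by lia.
    apply Min1; [lia|]. exists r. exact Hr. }
  apply (Hplus_trans R _ (nmul' (k2 * k2 + k2 + k2) (b * b))).
  - exact (rsr_Hplus_nmul' R decomp_qcr K HK (b * b) k1 _ Kv Kuu Hle).
  - rewrite <- nmul'_mul. exact (rsr_Hplus_sq R decomp_qcr K HK _ Ku).
Qed.

Lemma decomp_Hstar b : Hstar (b * b) b.
Proof.
  destruct (ex_is_m R (qcr_add_quasi_regular R decomp_qcr) (b * b)) as [m1 M1].
  destruct (ex_is_m R (qcr_add_quasi_regular R decomp_qcr) b) as [m2 M2].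
  destruct (decomp_Hplus_m b m1 m2 M1 M2) as [L Rr].
  split; exists m1, m2; (split; [exact M1 | split; [exact M2 | assumption]]).
Qed.

End FromDecomposition.

Theorem theorem3p4 (S : semiring) :
  (b_lattice_nilext_rsr S <->
     (quasi_compl_regular S /\
      forall e f : S, add_idem e -> add_idem f ->
        exists n, 0 < n /\ nmul n (e + f) = nmul (n + 1) (e + f)))
  /\
  (b_lattice_nilext_rsr S <->
     (add_quasi_regular S /\
      (forall b : S, Hstar (b * b) b) /\
      (forall a x : S, a = a + x + a -> a = a + nmul 2 x + nmul 2 a))).
Proof.
  split; split.
  - intros (rho & Hc & Hb & Hk). split.
    + eapply decomp_qcr; eassumption.
    + eapply decomp_periodic_idem_sum; eassumption.
  - intros [Hq Hper]. apply (b_lattice_of_arch S Hq).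
    intros e f He Hf Hg. destruct (Hper e f He Hf) as (n & Hn & E).
    exact (group_element_periodic_idem S _ n Hg Hn E).
  - intros (rho & Hc & Hb & Hk). split; [|split].
    + apply qcr_add_quasi_regular. eapply decomp_qcr; eassumption.
    + eapply decomp_Hstar; eassumption.
    + eapply decomp_doubled_inverse; eassumption.
  - intros (Haq & Hst & H3). apply (b_lattice_of_arch S).
    + exact (doubled_inverse_qcr S H3 Haq Hst).
    + intros e f He Hf [y [Y _]].
      apply (doubled_inverse_idem_sum S H3 e f He Hf). exists y. exact Y.
Qed.
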